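(* Let $k\ge2$ and $G=\mathrm{BS}(1,k)\cong\mathbb Z[\tfrac1k]\rtimes_\varphi\langle t\rangle$ with $\varphi(x)=kx$. Let $n\in\mathbb Z$ and let $A=\{(a_1,t^n),\dots,(a_r,t^n)\}\subseteq G$ be a finite set of $r$ distinct elements all with $t$-exponent sum $n$. Then there exist integers $N_1,N_2\ge0$ and a positive integer $L$ such that, with $g=t^{N_1}\,(L,1)\,t^{N_2}\in G$, the $r$ elements of $gA$ lie in pairwise distinct conjugacy classes of $G$, i.e. $c(gA)=|A|$.
   Context: Elements of $G$ are pairs $(x,t^m)$, $x\in\mathbb Z[1/k]$, with $(x,t^m)(x',t^{m'})=(x+k^mx',t^{m+m'})$; $t^m$ denotes $(0,t^m)$ and the $t$-exponent sum of $(x,t^m)$ is $m$. For $B\subseteq G$, $c(B)$ is the number of distinct conjugacy classes meeting $B$. *)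

From mathcomp Require Import all_boot all_order all_algebra.
Set Implicit Arguments. Unset Strict Implicit. Unset Printing Implicit Defensive.
Import Order.TTheory GRing.Theory Num.Theory.
Local Open Scope ring_scope.

Definition inZk (k : nat) (x : rat) : Prop :=
  exists (a : int) (j : nat), x = a%:~R / (k%:R ^+ j).

(* elements (x, t^m) of BS(1,k): pairs (x,m) with x in Z[1/k] *)
Definition BSel := (rat * int)%type.
Definition inBS (k : nat) (g : BSel) : Prop := inZk k g.1.

Definition bsmul (k : nat) (g h : BSel) : BSel :=
  (g.1 + (k%:R : rat) ^ g.2 * h.1, g.2 + h.2).
Definition bsinv (k : nat) (g : BSel) : BSel :=
  (- ((k%:R : rat) ^ (- g.2) * g.1), - g.2).

Definition tpow (m : int) : BSel := (0, m).

Definition bsconj (k : nat) (g h : BSel) : Prop :=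
  exists u : BSel, inBS k u /\ bsmul k (bsmul k u g) (bsinv k u) = h.

From mathcomp Require Import all_boot all_order all_algebra zify ring.
Import Order.TTheory GRing.Theory Num.Theory.
Set Implicit Arguments. Unset Strict Implicit. Unset Printing Implicit Defensive.

(* Clear denominators, k^E a_i = z_i with |z_i| <= Y, and shift by L = 3Y + 1: the
   translates become (k^N1 s_i, t^(2h)) with s_i in [2Y + 1, 4Y + 1].  Conjugating
   (u, t^m) by (w, t^p) gives (k^p u + (1 - k^m) w, t^m), so conjugate translates
   satisfy k^A s_i = k^B s_j modulo k^(2h) - 1, a modulus in which k is invertible
   of order 2h.  Since s_i, s_j < k^h this forces s_i = k^e s_j or s_j = k^e s_i,
   impossible for e > 0 inside an interval [2Y + 1, 4Y + 1]. *)

Lemma expn_mod_pred (k m A : nat) : (0 < k)%N ->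
  (k ^ A = k ^ (A %% m) %[mod k ^ m - 1])%N.
Proof.
move=> k_gt0; have km1 : (k ^ m = 1 %[mod k ^ m - 1])%N.
  by rewrite -{1}(subnK (_ : 0 < k ^ m)%N) ?expn_gt0 ?k_gt0 // modnDl.
rewrite {1}(divn_eq A m) expnD (mulnC _ m) expnM -modnMml -modnXm km1 modnXm.
by rewrite exp1n modnMml mul1n.
Qed.

Lemma expn_mul_lt_pred (k h e x : nat) : (1 < k)%N -> (0 < h)%N -> (e <= h)%N ->
  (x < k ^ h)%N -> (k ^ e * x < k ^ (h + h) - 1)%N.
Proof.
move=> k_gt1 h_gt0 le_eh lt_xh.
have le_keh : (k ^ e <= k ^ h)%N by rewrite leq_pexp2l // ltnW.
have : (2 <= k ^ h)%N.
  by case: h h_gt0 {le_eh lt_xh le_keh} => // h _; exact: leq_trans (ltn_expl _ k_gt1).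
rewrite expnD; move: le_keh; set P := k ^ h; set Q := k ^ e => *; nia.
Qed.

Lemma expn_mod_pred_cancel (k m A B u v : nat) : (0 < k)%N -> (0 < m)%N ->
  (k ^ A * u = k ^ B * v %[mod k ^ m - 1])%N ->
  exists2 r, (r < m)%N & (u = k ^ r * v %[mod k ^ m - 1])%N.
Proof.
move=> k_gt0 m_gt0 eq_uv; exists (((m - 1) * A + B) %% m)%N; first by rewrite ltn_mod.
have kmA1 : (k ^ (m * A) = 1 %[mod k ^ m - 1])%N by rewrite expn_mod_pred // mulnC modnMl.
rewrite -[in RHS]modnMml -expn_mod_pred // modnMml expnD -mulnA.
rewrite -modnMmr -eq_uv modnMmr mulnA -expnD -{2}(mul1n A) -mulnDl subnK //.
by rewrite -modnMml kmA1 modnMml mul1n.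
Qed.

Lemma expn_mod_pred_small (k h A B u v : nat) : (1 < k)%N -> (0 < h)%N ->
  (u < k ^ h)%N -> (v < k ^ h)%N ->
  (k ^ A * u = k ^ B * v %[mod k ^ (h + h) - 1])%N ->
  exists2 e, (e <= h)%N & u = (k ^ e * v)%N \/ v = (k ^ e * u)%N.
Proof.
move=> k_gt1 h_gt0 lt_uh lt_vh eq_uv; have k_gt0 := ltnW k_gt1.
have m_gt0 : (0 < h + h)%N by rewrite addn_gt0 h_gt0.
have [r lt_rm {}eq_uv] := expn_mod_pred_cancel k_gt0 m_gt0 eq_uv.
have small e x : (e <= h)%N -> (x < k ^ h)%N -> (k ^ e * x) %% (k ^ (h + h) - 1) = k ^ e * x.
  by move=> le_eh lt_xh; rewrite modn_small // expn_mul_lt_pred.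
have u_mod : u %% (k ^ (h + h) - 1) = u by rewrite -[u]mul1n -(expn0 k) small.
have v_mod : v %% (k ^ (h + h) - 1) = v by rewrite -[v]mul1n -(expn0 k) small.
case: (leqP r h) => [le_rh | lt_hr].
  by exists r => //; left; rewrite -u_mod eq_uv small.
have le_mrh : (h + h - r <= h)%N by rewrite leq_subLR leq_add2r ltnW.
exists (h + h - r)%N => //; right.
have kmv : v = (k ^ (h + h - r) * (k ^ r * v)) %[mod k ^ (h + h) - 1].
  rewrite mulnA -expnD subnK ?(ltnW lt_rm) // -modnMml (expn_mod_pred _ _ k_gt0) modnn.
  by rewrite expn0 modnMml mul1n.
by rewrite -v_mod kmv -modnMmr -eq_uv modnMmr small.
Qed.

Local Open Scope ring_scope.

Lemma exprz_split (R : unitRingType) (x : R) (p : int) :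
  exists al be : nat, x ^ p = x ^+ al / x ^+ be.
Proof.
case: p => [al | be]; first by exists al, 0%N; rewrite expr0 divr1.
by exists 0%N, be.+1; rewrite expr0 div1r.
Qed.

Lemma shift_into_band (Y : nat) (z : int) : (`|z| <= Y)%N ->
  exists2 s : nat, s%:Z = (3 * Y + 1)%N%:Z + z & (2 * Y + 1 <= s <= 4 * Y + 1)%N.
Proof. by move=> le_zY; exists (absz ((3 * Y + 1)%N%:Z + z)); lia. Qed.

Lemma band_mul_eq (Y t u v : nat) : (2 * Y + 1 <= u <= 4 * Y + 1)%N ->
  (2 * Y + 1 <= v <= 4 * Y + 1)%N -> u = (t * v)%N -> u = v.
Proof. by case: t => [|[|t]] => *; nia. Qed.

Section BaumslagSolitar.

Variable k : nat.
Hypothesis k_gt0 : (0 < k)%N.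
Local Notation K := (k%:R : rat).

Lemma K_neq0 : K != 0. Proof. by rewrite pnatr_eq0 -lt0n. Qed.

Lemma expK_neq0 (e : nat) : K ^+ e != 0. Proof. by rewrite expf_neq0 ?K_neq0. Qed.

Lemma inZk_divX (w : rat) (N : nat) : inZk k w -> inZk k (w / K ^+ N).
Proof. by case=> c [j ->]; exists c, (j + N)%N; rewrite exprD invfM mulrA. Qed.

Lemma bsconj_fst (u v : rat) (m m' : int) : bsconj k (u, m) (v, m') ->
  exists p (w : rat), inZk k w /\ v = K ^ p * u + (1 - K ^ m) * w.
Proof.
case=> [[w p] [w_Zk /= [<- _]]]; exists p, w; split => //.
rewrite -invr_expz addrC expfzDr ?K_neq0 //; field.
by rewrite expfz_neq0 ?K_neq0.
Qed.

Lemma bsmul_tpow_shift (N1 N2 L : nat) (x : rat) (n : int) :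
  bsmul k (bsmul k (bsmul k (tpow N1) (L%:~R, 0)) (tpow N2)) (x, n)
  = (K ^+ N1 * (L%:R + K ^+ N2 * x), N1%:Z + N2%:Z + n).
Proof.
rewrite /bsmul /tpow /= !add0r !addr0 mulr0 addr0 -PoszD -!exprnP exprD.
by rewrite mulrDr mulrA.
Qed.

Lemma conj_nat_mod (m s s' : nat) (p : int) (w : rat) : inZk k w ->
  s'%:R = K ^ p * s%:R + (1 - K ^+ m) * w ->
  exists A B : nat, (k ^ A * s = k ^ B * s' %[mod k ^ m - 1])%N.
Proof.
case=> c [j ->]; have [al [be ->]] := exprz_split K p => eq_s.
exists (al + j)%N, (be + j)%N.
have eq_int : (k ^ (be + j) * s')%N%:Z
    = (k ^ (al + j) * s)%N%:Z + (- (c * (k ^ be)%N%:Z)) * ((k ^ m)%N%:Z - 1).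
  apply: (@intr_inj rat); rewrite !(intrD, intrM, intrN, intrB) -!pmulrn.
  rewrite !natrM !natrX eq_s !exprD; by field; rewrite !expK_neq0.
apply/eqP; rewrite -(eqz_nat (_ %% _)) -!modz_nat eq_int addrC -subzn ?expn_gt0 ?k_gt0 //.
by rewrite modzMDl.
Qed.

Lemma bsconj_nat_mod (N m s s' : nat) (m' : int) :
  bsconj k (K ^+ N * s%:R, m%:Z) (K ^+ N * s'%:R, m') ->
  exists A B : nat, (k ^ A * s = k ^ B * s' %[mod k ^ m - 1])%N.
Proof.
case/bsconj_fst=> p [w [w_Zk eq_w]]; apply: (conj_nat_mod (inZk_divX N w_Zk)).
rewrite -exprnP in eq_w; apply: (mulfI (expK_neq0 N)); rewrite eq_w; field.
exact: expK_neq0.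
Qed.

Lemma inZk_seq_scaled (a : seq rat) : (forall x, x \in a -> inZk k x) ->
  exists E Y : nat, forall x, x \in a -> exists2 z : int, K ^+ E * x = z%:~R & (`|z| <= Y)%N.
Proof.
elim: a => [|x a IHa] a_Zk; first by exists 0%N, 0%N.
have [|E [Y scaled_a]] := IHa; first by move=> y ya; apply: a_Zk; rewrite inE ya orbT.
have [c [j ->]] := a_Zk x (mem_head _ _).
exists (E + j)%N, (maxn (`|c| * k ^ E) (Y * k ^ j)) => y; rewrite inE => /predU1P [-> | ya].
  exists (c * (k ^ E)%N); last by rewrite abszM leq_maxl.
  rewrite exprD intrM -pmulrn natrX; by field; rewrite expK_neq0.
have [z scaled_y le_zY] := scaled_a y ya.
exists (z * (k ^ j)%N); first by rewrite exprD mulrAC scaled_y intrM -pmulrn natrX mulrC.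
by rewrite abszM (leq_trans _ (leq_maxr _ _)) // leq_mul2r le_zY orbT.
Qed.

End BaumslagSolitar.

Theorem lemma5p3 (k : nat) (hk : (2 <= k)%N) (n : int) (a : seq rat)
  (ha : forall x, x \in a -> inZk k x) (huniq : uniq a) :
  exists (N1 N2 : nat) (L : nat), (0 < L)%N /\
    let g := bsmul k (bsmul k (tpow N1%:Z) (L%:~R, 0)) (tpow N2%:Z) in
    forall x y, x \in a -> y \in a -> x <> y ->
      ~ bsconj k (bsmul k g (x, n)) (bsmul k g (y, n)).
Proof.
have k_gt0 : (0 < k)%N by apply: ltnW.
have [E [Y scaled]] := inZk_seq_scaled k_gt0 ha.
set L := (3 * Y + 1)%N; set h := (4 * Y + 2 + E + `|n|)%N.
have band x : x \in a -> exists2 s : nat,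
    s%:R = L%:R + (k%:R : rat) ^+ E * x & (2 * Y + 1 <= s <= 4 * Y + 1)%N.
  move=> xa; have [z -> le_zY] := scaled x xa; have [s sE s_band] := shift_into_band le_zY.
  by exists s => //; rewrite -[s%:R]/(s%:~R) sE intrD.
have h_gt0 : (0 < h)%N by rewrite /h addnS.
have lt_band_h s : (2 * Y + 1 <= s <= 4 * Y + 1)%N -> (s < k ^ h)%N.
  by case/andP=> _ le_s; apply: leq_trans _ (ltn_expl h hk); rewrite ltnS /h; lia.
set N1 := absz ((h + h)%N%:Z - E%:Z - n)%R.
have exp_sum : N1%:Z + E%:Z + n = (h + h)%N%:Z by rewrite /N1 /h; lia.
exists N1, E, L; split; first by rewrite /L addn1.
move=> g x y xa ya neq_xy; rewrite /g !bsmul_tpow_shift exp_sum.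
have [sx sxE sx_band] := band x xa; have [sy syE sy_band] := band y ya.
rewrite -sxE -syE => /(bsconj_nat_mod k_gt0) [A [B eq_mod]].
have lt_sx_kh := lt_band_h _ sx_band; have lt_sy_kh := lt_band_h _ sy_band.
have [e _ eq_sxy] := expn_mod_pred_small hk h_gt0 lt_sx_kh lt_sy_kh eq_mod.
have {eq_sxy} eq_sxy : sx = sy.
  case: eq_sxy => eq_sxy; first exact: band_mul_eq sx_band sy_band eq_sxy.
  exact/esym/(band_mul_eq sy_band sx_band eq_sxy).
apply: neq_xy; apply: (mulfI (expK_neq0 k_gt0 E)); apply: (addrI L%:R).
by rewrite -sxE -syE eq_sxy.
Qed.
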